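(* Let $V\ge 1$, let $z\in\mathbb{R}^V$ be a logit vector and $p=\mathrm{softmax}(z)$, i.e. $p_i=e^{z_i}/\sum_{k=1}^V e^{z_k}$. Partition $\{1,\dots,V\}=\mathcal{P}\sqcup\mathcal{N}$ into correct tokens $\mathcal{P}$ and incorrect tokens $\mathcal{N}$. Let $N\ge 1$ be the number of sampled rollout tokens, let $A\subseteq\mathcal{P}$ be the set of sampled correct tokens, $B\subseteq\mathcal{N}$ the set of sampled incorrect tokens, and $U=\{1,\dots,V\}\setminus(A\cup B)$ the set of unsampled tokens. Let rewards $R_c\ge 0\ge R_w$ be given and set $R_j=R_c$ for $j\in A$, $R_j=R_w$ for $j\in B$, $R_j=0$ for $j\in U$. Define $P_{\mathrm{pos}}=\sum_{i\in A}p_i$, $P_{\mathrm{neg}}=\sum_{i\in B}p_i$, $Q_{\mathrm{pos}}=\sum_{i\in\mathcal{P}}p_i$, $Q_{\mathrm{neg}}=1-Q_{\mathrm{pos}}$, $A_2=\sum_{i\in A}p_i^2$, $B_2=\sum_{i\in B}p_i^2$, $U_{\mathrm{pos},2}=\sum_{i\in U\cap\mathcal{P}}p_i^2$, $U_{\mathrm{neg},2}=\sum_{i\in U\cap\mathcal{N}}p_i^2$, and $S_R=R_cP_{\mathrm{pos}}+R_wP_{\mathrm{neg}}$. Let $\eta>0$ and consider the one-step logit update (a gradient-descent step with learning rate $\eta$ on the surrogate loss $-\frac1N\sum_{i=1}^V R_i p_i$) $$\Delta z_j=\frac{\eta}{N}\,p_j\,(R_j-S_R),\qquad j=1,\dots,V,$$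 with induced first-order probability change $\Delta p_i=\sum_{j=1}^V\frac{\partial p_i}{\partial z_j}\Delta z_j=p_i\big(\Delta z_i-\sum_{j=1}^V p_j\Delta z_j\big)$, and let $\Delta Q_{\mathrm{pos}}=\sum_{i\in\mathcal{P}}\Delta p_i$. Then $$\Delta Q_{\mathrm{pos}}=\frac{\eta}{N}\Big[(R_c-S_R)\,Q_{\mathrm{neg}}\,A_2+(S_R-R_w)\,Q_{\mathrm{pos}}\,B_2+S_R\big(Q_{\mathrm{pos}}U_{\mathrm{neg},2}-Q_{\mathrm{neg}}U_{\mathrm{pos},2}\big)\Big].$$ Moreover $A_2,B_2\ge 0$ and $S_R\in[R_w,R_c]$, so $R_c-S_R\ge0$ and $S_R-R_w\ge 0$; hence the first two terms in the bracket are nonnegative.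
   Context: This models a single reinforcement-learning-with-verifiable-rewards update at the token level: $N$ tokens are sampled from $p$, sampled correct tokens receive reward $R_c$, sampled incorrect tokens receive reward $R_w$, and unsampled tokens receive reward $0$. $\Delta Q_{\mathrm{pos}}$ is the first-order (linearized) change in the total probability mass of correct tokens. *)

From HB Require Import structures.
From mathcomp Require Import all_boot all_order all_algebra.
From mathcomp Require Import all_classical all_reals all_analysis.
Set Implicit Arguments. Unset Strict Implicit. Unset Printing Implicit Defensive.
Import Order.TTheory GRing.Theory Num.Theory.
Local Open Scope ring_scope.

Section Defs.
Variables (R : realType) (V : nat).

Definition softmax (z : 'I_V -> R) (i : 'I_V) : R :=
  expR (z i) / \sum_(k < V) expR (z k).

Definition reward (A B : {set 'I_V}) (Rc Rw : R) (j : 'I_V) : R :=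
  if j \in A then Rc else if j \in B then Rw else 0.

Definition SR (p : 'I_V -> R) (A B : {set 'I_V}) (Rc Rw : R) : R :=
  Rc * (\sum_(i in A) p i) + Rw * (\sum_(i in B) p i).

Definition delta_z (p : 'I_V -> R) (A B : {set 'I_V}) (Rc Rw eta : R) (N : nat)
  (j : 'I_V) : R :=
  eta / N%:R * p j * (reward A B Rc Rw j - SR p A B Rc Rw).

(* first-order change Δp_i = Σ_j (∂p_i/∂z_j) Δz_j, with ∂p_i/∂z_j = p_i(δ_ij - p_j) *)
Definition delta_p (p dz : 'I_V -> R) (i : 'I_V) : R :=
  \sum_(j < V) (p i * ((i == j)%:R - p j)) * dz j.

End Defs.

From Pilot Require Import Defs.
From HB Require Import structures.
From mathcomp Require Import all_boot all_order all_algebra.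
From mathcomp Require Import all_classical all_reals all_analysis.
From mathcomp Require Import ring lra.
Import Order.TTheory GRing.Theory Num.Theory.
Local Open Scope ring_scope.

(* The linearised softmax change is Δp_i = p_i (Δz_i - D) with
   D = Σ_j p_j Δz_j, so ΔQ_pos = Σ_{i ∈ P} p_i Δz_i - Q_pos D.  The reward is
   constant on each of the four classes A, B, U ∩ P, U ∩ N, and
   p_j Δz_j = (η/N) (R_j - S_R) p_j², so both sums are linear combinations of
   A_2, B_2, U_pos,2 and U_neg,2; collecting terms gives the identity.  Since
   S_R = R_c x + R_w y with x, y ∈ [0, 1] and R_w <= 0 <= R_c, S_R lies in
   [R_w, R_c]. *)

Lemma big_setU_subset_split {M : nmodType} {T : finType} {P A B : {set T}}
    (f : T -> M) :
  A \subset P -> B \subset ~: P ->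
  \sum_(i in P) f i = \sum_(i in A) f i + \sum_(i in ~: (A :|: B) :&: P) f i.
Proof.
move=> sAP /fintype.subsetP sBnP; rewrite (big_setID A) (finset.setIidPr sAP).
congr (_ + _); apply: eq_bigl => i; rewrite !inE negb_or.
case iP: (i \in P); rewrite ?andbF ?andbT //.
suff /negbTE -> : i \notin B by rewrite andbT.
by apply: contraL iP => /sBnP; rewrite inE.
Qed.

Lemma big_setC_split {M : nmodType} {T : finType} (P : {set T}) (f : T -> M) :
  \sum_i f i = \sum_(i in P) f i + \sum_(i in ~: P) f i.
Proof.
by rewrite (bigID (mem P)) /=; congr (_ + _); apply: eq_bigl => i; rewrite inE.
Qed.

Section Softmax.
Variables (R : realType) (V : nat).

Lemma softmax_ge0 (z : 'I_V -> R) i : 0 <= softmax z i.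
Proof. by rewrite divr_ge0 ?expR_ge0 ?sumr_ge0 // => k _; apply: expR_ge0. Qed.

Lemma sum_softmax (hV : (0 < V)%N) (z : 'I_V -> R) : \sum_(i < V) softmax z i = 1.
Proof.
have sum_gt0 : 0 < \sum_(k < V) expR (z k).
  rewrite (bigD1 (Ordinal hV)) //= ltr_pwDl ?expR_gt0 //.
  by apply: sumr_ge0 => k _; apply: expR_ge0.
by rewrite -mulr_suml divff // gt_eqF.
Qed.

Lemma sum_softmax_le1 (hV : (0 < V)%N) (z : 'I_V -> R) (C : {set 'I_V}) :
  \sum_(i in C) softmax z i <= 1.
Proof.
rewrite -(sum_softmax hV z) [X in _ <= X](bigID (mem C)) /= lerDl.
by apply: sumr_ge0 => i _; apply: softmax_ge0.
Qed.

End Softmax.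

Lemma delta_pE (R : realType) (V : nat) (p dz : 'I_V -> R) i :
  delta_p p dz i = p i * (dz i - \sum_(j < V) p j * dz j).
Proof.
rewrite /delta_p mulrBr mulr_sumr.
under eq_bigr => j _ do rewrite mulrBr mulrBl -!mulrA.
rewrite sumrB (bigD1 i) //= eqxx mul1r big1 ?addr0 // => j /negbTE.
by rewrite eq_sym => ->; rewrite !mul0r mulr0.
Qed.

Lemma sum_delta_p (R : realType) (V : nat) (p dz : 'I_V -> R) (C : {set 'I_V}) :
  \sum_(i in C) delta_p p dz i =
  \sum_(i in C) p i * dz i - (\sum_(i in C) p i) * \sum_(j < V) p j * dz j.
Proof.
by rewrite mulr_suml -sumrB; apply: eq_bigr => i _; rewrite delta_pE mulrBr.
Qed.

Section RewardUpdate.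
Variables (R : realType) (V : nat) (Pset A B : {set 'I_V}).
Hypotheses (hA : A \subset Pset) (hB : B \subset ~: Pset).
Variables (p : 'I_V -> R) (Rc Rw eta : R) (N : nat).

Local Notation reward := (reward A B Rc Rw).
Local Notation S := (SR p A B Rc Rw).
Local Notation dz := (delta_z p A B Rc Rw eta N).
Local Notation U := (~: (A :|: B)).

Lemma reward_sampled_correct j : j \in A -> reward j = Rc.
Proof. by rewrite /Defs.reward => ->. Qed.

Lemma reward_sampled_incorrect j : j \in B -> reward j = Rw.
Proof.
move=> jB; have jA : j \notin A.
  apply: contraL jB => /(fintype.subsetP hA) jP.
  by apply/negP => /(fintype.subsetP hB); rewrite inE jP.
by rewrite /Defs.reward (negbTE jA) jB.
Qed.

Lemma reward_unsampled j : j \in U -> reward j = 0.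
Proof. by rewrite !inE negb_or /Defs.reward => /andP[/negbTE -> /negbTE ->]. Qed.

Lemma sum_p_delta_z_const {C : {set 'I_V}} {r : R} :
  {in C, forall j, reward j = r} ->
  \sum_(j in C) p j * dz j = eta / N%:R * (r - S) * \sum_(j in C) p j ^+ 2.
Proof.
move=> Cr; rewrite mulr_sumr; apply: eq_bigr => j jC.
by rewrite /delta_z Cr //; ring.
Qed.

Lemma delta_Qpos_eq :
  let Qpos := \sum_(i in Pset) p i in
  let A2 := \sum_(i in A) p i ^+ 2 in
  let B2 := \sum_(i in B) p i ^+ 2 in
  let Upos2 := \sum_(i in U :&: Pset) p i ^+ 2 in
  let Uneg2 := \sum_(i in U :&: ~: Pset) p i ^+ 2 in
  \sum_(i in Pset) delta_p p dz i =
  eta / N%:R * ((Rc - S) * (1 - Qpos) * A2 + (S - Rw) * Qpos * B2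
                + S * (Qpos * Uneg2 - (1 - Qpos) * Upos2)).
Proof.
move=> Qpos A2 B2 Upos2 Uneg2.
have hA' : A \subset ~: ~: Pset by rewrite finset.setCK.
have sumA := sum_p_delta_z_const reward_sampled_correct.
have sumB := sum_p_delta_z_const reward_sampled_incorrect.
have U_reward0 C : {in U :&: C, forall j, reward j = 0}.
  by move=> j /finset.setIP[/reward_unsampled].
have sumUpos := sum_p_delta_z_const (U_reward0 Pset).
have sumUneg := sum_p_delta_z_const (U_reward0 (~: Pset)).
have sumP : \sum_(j in Pset) p j * dz j =
    eta / N%:R * ((Rc - S) * A2 + (0 - S) * Upos2).
  by rewrite (big_setU_subset_split _ hA hB) sumA sumUpos -/A2 -/Upos2; ring.
have sumD : \sum_(j < V) p j * dz j = eta / N%:R *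
    ((Rc - S) * A2 + (Rw - S) * B2 + (0 - S) * Upos2 + (0 - S) * Uneg2).
  rewrite (big_setC_split Pset) sumP (big_setU_subset_split _ hB hA').
  by rewrite finset.setUC sumB sumUneg -/B2 -/Uneg2; ring.
by rewrite sum_delta_p sumP sumD -/Qpos; ring.
Qed.

End RewardUpdate.

Lemma SR_bounds (R : realType) (V : nat) (p : 'I_V -> R) (A B : {set 'I_V})
    (Rc Rw : R) :
  0 <= Rc -> Rw <= 0 -> (forall i, 0 <= p i) ->
  (forall C : {set 'I_V}, \sum_(i in C) p i <= 1) ->
  Rw <= SR p A B Rc Rw /\ SR p A B Rc Rw <= Rc.
Proof.
move=> Rc_ge0 Rw_le0 p_ge0 p_le1.
have PA_ge0 : 0 <= \sum_(i in A) p i by apply: sumr_ge0.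
have PB_ge0 : 0 <= \sum_(i in B) p i by apply: sumr_ge0.
have := p_le1 A; have := p_le1 B; rewrite /SR; split; nra.
Qed.

Theorem theorem1 (R : realType) (V : nat) (hV : (1 <= V)%N)
  (z : 'I_V -> R) (Pset A B : {set 'I_V}) (N : nat) (hN : (1 <= N)%N)
  (hA : A \subset Pset) (hB : B \subset ~: Pset)
  (Rc Rw eta : R) (hRc : 0 <= Rc) (hRw : Rw <= 0) (heta : 0 < eta) :
  let p := softmax z in
  let U := ~: (A :|: B) in
  let Qpos := \sum_(i in Pset) p i in
  let Qneg := 1 - Qpos in
  let A2 := \sum_(i in A) p i ^+ 2 in
  let B2 := \sum_(i in B) p i ^+ 2 in
  let Upos2 := \sum_(i in U :&: Pset) p i ^+ 2 in
  let Uneg2 := \sum_(i in U :&: ~: Pset) p i ^+ 2 in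
  let S := SR p A B Rc Rw in
  let dz := delta_z p A B Rc Rw eta N in
  let dQpos := \sum_(i in Pset) delta_p p dz i in
  [/\ dQpos = eta / N%:R * ((Rc - S) * Qneg * A2 + (S - Rw) * Qpos * B2
                            + S * (Qpos * Uneg2 - Qneg * Upos2)),
      0 <= A2 /\ 0 <= B2, Rw <= S /\ S <= Rc,
      0 <= Rc - S /\ 0 <= S - Rw &
      0 <= (Rc - S) * Qneg * A2 /\ 0 <= (S - Rw) * Qpos * B2].
Proof.
move=> p U Qpos Qneg A2 B2 Upos2 Uneg2 S dz dQpos.
have A2_ge0 : 0 <= A2 by apply: sumr_ge0 => i _; apply: sqr_ge0.
have B2_ge0 : 0 <= B2 by apply: sumr_ge0 => i _; apply: sqr_ge0.
have Qpos_ge0 : 0 <= Qpos by apply: sumr_ge0 => i _; apply: softmax_ge0.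
have Qneg_ge0 : 0 <= Qneg by rewrite subr_ge0; apply: sum_softmax_le1.
have [S_ge S_le] : Rw <= S /\ S <= Rc.
  by apply: SR_bounds => //; [apply: softmax_ge0 | apply: sum_softmax_le1].
split; [exact: delta_Qpos_eq | by [] | by [] | split; lra |].
by split; rewrite !mulr_ge0 // subr_ge0.
Qed.
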